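(* Let $(\Sigma,\mathsf{ar})$ be an at most countable binding signature with associated functors $F,F_\alpha$ and maps $a^{(n)}$. For every $n$, the commuting square formed by $F^n(!):F^{n+1}1\to F^n1$, $a^{(n)}:F^n1\to F_\alpha^n1$, $a^{(n+1)}:F^{n+1}1\to F_\alpha^{n+1}1$ and $F_\alpha^n(!):F_\alpha^{n+1}1\to F_\alpha^n1$ is a safe square.
   Context: Nominal sets over a countably infinite set $\mathcal V$ of names; $[\mathcal V]X$ the name-abstraction with classes $\langle x\rangle u$. Binding signature: symbols $\mathsf{op}\in\Sigma$ with arities finite lists $(n_1,\dots,n_k)$. $F_\alpha X=\mathcal V+\coprod_{\mathsf{op}}\prod_i[\mathcal V]^{n_i}X$, $FX=\mathcal V+\coprod_{\mathsf{op}}\prod_i(\mathcal V^{n_i}\times X)$, $q_X:FX\to F_\alpha X$ identity on $\mathcal V$ and $(x^1,\dots,x^n,u)\mapsto\langle x^1\rangle\cdots\langle x^n\rangle u$ on factors. $1=\{*\}$, $!$ the unique map to $1$; $a^{(0)}=\mathrm{id}_1$, $a^{(n+1)}=q_{F_\alpha^n1}\circ F(a^{(n)})$. For equivariant $f$: $u$ is $f$-safe if $|\mathsf{supp}(u)|=\max\{|\mathsf{supp}(v)|:v\in f^{-1}(f(u))\}$; $\mathsf{bv}_f(u)=\mathsf{supp}(u)\setminus\mathsf{supp}(f(u))$. A commuting square $p:Z\to X$, $f:X\to W$, $g:Z\to Y$, $q:Y\to W$ ($f\circ p=q\circ g$) is a safe square if for every $f$-safe $u\in X$ and $v\in Y$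 with $f(u)=q(v)$ and $\mathsf{bv}_f(u)\cap\mathsf{supp}(v)=\emptyset$ there is a $g$-safe $z\in Z$ with $p(z)=u$, $g(z)=v$. *)

From mathcomp Require Import all_boot.
From Stdlib Require Import ClassicalEpsilon.

Set Implicit Arguments.
Unset Strict Implicit.
Unset Printing Implicit Defensive.

(* Names: V = nat (countably infinite).  Transposition (a b) on names. *)
Definition swapn (a b c : nat) : nat :=
  if c == a then b else if c == b then a else c.

(* A set with an action of name transpositions (the permutation action
   of a nominal set, presented through transpositions as in Pitts). *)
Record pset := PSet { car :> Type; swp : nat -> nat -> car -> car }.
Arguments swp : clear implicits.

Definition supports (X : pset) (l : seq nat) (x : X) : Prop :=
  forall b c, b \notin l -> c \notin l -> swp X b c x = x.

(* a \in supp(x): a lies in every finite support of x (least support). *)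
Definition in_supp (X : pset) (x : X) (a : nat) : Prop :=
  forall l, supports l x -> a \in l.

Definition supp_size (X : pset) (x : X) (k : nat) : Prop :=
  exists l : seq nat, [/\ uniq l, (forall a, a \in l <-> in_supp x a) & size l = k].

Definition unitP : pset := @PSet unit (fun _ _ x => x).

(* Name abstraction [V]X : alpha-equivalence classes of pairs (a, x).
   (a,x) ~ (a',x') iff (a c).x = (a' c).x' for some c # (a,x,a',x'). *)
Definition alpha_cls (X : pset) (a : nat) (x : X) : nat * X -> Prop :=
  fun p => exists c, [/\ c != a, c != p.1, ~ in_supp x c, ~ in_supp p.2 c
                       & swp X a c x = swp X p.1 c p.2].

Definition abs_car (X : pset) : Type :=
  {P : nat * X -> Prop | exists a, exists x, P = alpha_cls a x}.

Definition abs_mk (X : pset) (a : nat) (x : X) : abs_car X :=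
  exist _ (alpha_cls a x) (ex_intro _ a (ex_intro _ x erefl)).

Definition abs_rep (X : pset) (t : abs_car X) : nat * X :=
  let s := constructive_indefinite_description _ (proj2_sig t) in
  let s2 := constructive_indefinite_description _ (proj2_sig s) in
  (proj1_sig s, proj1_sig s2).

(* (b c).<a>x = <(b c)a>((b c).x) *)
Definition absP (X : pset) : pset :=
  @PSet (abs_car X)
    (fun b c t => abs_mk (swapn b c (abs_rep t).1) (swp X b c (abs_rep t).2)).

Definition abs_map (X Y : pset) (f : X -> Y) (t : absP X) : absP Y :=
  abs_mk (abs_rep t).1 (f (abs_rep t).2).

Fixpoint absn (k : nat) (X : pset) : pset :=
  match k with 0 => X | S k' => absP (absn k' X) end.

Fixpoint absn_map (k : nat) (X Y : pset) (f : X -> Y) : absn k X -> absn k Y :=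
  match k return absn k X -> absn k Y with
  | 0 => f
  | S k' => abs_map (@absn_map k' X Y f)
  end.

Fixpoint qn (X : pset) (k : nat) : k.-tuple nat -> X -> absn k X :=
  match k return k.-tuple nat -> X -> absn k X with
  | 0 => fun _ x => x
  | S k' => fun t x => abs_mk (thead t) (@qn X k' (behead_tuple t) x)
  end.

(* Binding signature: operation symbols Op with arities ar op = (n_1..n_k). *)
Section Functors.
Variables (Op : Type) (ar : Op -> seq nat).

(* F X = V + coprod_op prod_i (V^{n_i} x X) *)
Definition F_car (X : pset) : Type :=
  (nat + {op : Op & forall i : 'I_(size (ar op)),
                     ((nth 0 (ar op) i).-tuple nat * X)%type})%type.

Definition F (X : pset) : pset :=
  @PSet (F_car X) (fun b c u =>
    match u with
    | inl a => inl (swapn b c a)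
    | inr (existT op h) =>
        inr (existT _ op (fun i => (map_tuple (swapn b c) (h i).1, swp X b c (h i).2)))
    end).

Definition Fmap (X Y : pset) (f : X -> Y) (u : F X) : F Y :=
  match u with
  | inl a => inl a
  | inr (existT op h) => inr (existT _ op (fun i => ((h i).1, f (h i).2)))
  end.

(* F_alpha X = V + coprod_op prod_i [V]^{n_i} X *)
Definition Fa_car (X : pset) : Type :=
  (nat + {op : Op & forall i : 'I_(size (ar op)), absn (nth 0 (ar op) i) X})%type.

Definition Fa (X : pset) : pset :=
  @PSet (Fa_car X) (fun b c u =>
    match u with
    | inl a => inl (swapn b c a)
    | inr (existT op h) => inr (existT _ op (fun i => swp _ b c (h i)))
    end).

Definition Famap (X Y : pset) (f : X -> Y) (u : Fa X) : Fa Y :=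
  match u with
  | inl a => inl a
  | inr (existT op h) => inr (existT _ op (fun i => @absn_map _ X Y f (h i)))
  end.

Definition q (X : pset) (u : F X) : Fa X :=
  match u with
  | inl a => inl a
  | inr (existT op h) => inr (existT _ op (fun i => qn (h i).1 (h i).2))
  end.

Fixpoint Fn (n : nat) : pset :=
  match n with 0 => unitP | S m => F (Fn m) end.
Fixpoint Fan (n : nat) : pset :=
  match n with 0 => unitP | S m => Fa (Fan m) end.

Fixpoint Fbang (n : nat) : Fn n.+1 -> Fn n :=
  match n return Fn n.+1 -> Fn n with
  | 0 => fun _ => tt
  | S m => Fmap (@Fbang m)
  end.
Fixpoint Fabang (n : nat) : Fan n.+1 -> Fan n :=
  match n return Fan n.+1 -> Fan n with
  | 0 => fun _ => tt
  | S m => Famap (@Fabang m)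
  end.

Fixpoint amap (n : nat) : Fn n -> Fan n :=
  match n return Fn n -> Fan n with
  | 0 => fun x => x
  | S m => fun u => q (Fmap (@amap m) u)
  end.
End Functors.
Arguments Fbang {Op} ar n _.
Arguments Fabang {Op} ar n _.
Arguments amap {Op} ar n _.
Arguments Fn {Op} ar n.
Arguments Fan {Op} ar n.

Definition safe (X W : pset) (f : X -> W) (u : X) : Prop :=
  exists k, supp_size u k /\
    forall v k', f v = f u -> supp_size v k' -> k' <= k.

(* Commuting square p : Z -> X, f : X -> W, g : Z -> Y, q : Y -> W which
   is safe. bv_f(u) = supp u \ supp (f u). *)
Definition safe_square (Z X Y W : pset)
    (p : Z -> X) (f : X -> W) (g : Z -> Y) (qq : Y -> W) : Prop :=
  (forall z, f (p z) = qq (g z)) /\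
  forall (u : X) (v : Y),
    safe f u -> f u = qq v ->
    (forall a, in_supp u a -> ~ in_supp (f u) a -> ~ in_supp v a) ->
    exists z : Z, [/\ safe g z, p z = u & g z = v].

(* Elements of F^n 1 are raw terms of depth n, [a^(n)] identifies them up to
   alpha-equivalence.  The proof rests on two facts about raw terms w.
   - Support formula: supp(w) = supp(a w) u binders(w), where binders(w) lists
     the binding occurrences of w.  Since alpha-equivalent terms have the same
     number of binders and every term can be alpha-renamed so that its binders
     are distinct and fresh ([refresh]), w is a-safe iff its binders are
     pairwise distinct and disjoint from supp(a w) ([safe_iff_fresh_binders]).
   - Lifting: if u has fresh binders, a u = F_alpha^n(!) v and the binders of
     u avoid supp v, then v is the image of a term z over u with fresh
     binders ([lift]).  By induction on n, each abstraction of v is opened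
     along the binder names of u, and the binders that z adds at depth n+1 are
     chosen fresh and pairwise distinct ([disjoint_choice]). *)
From mathcomp Require Import all_boot.
From Stdlib Require Import Classical ClassicalEpsilon ProofIrrelevance
  FunctionalExtensionality PropExtensionality Eqdep.

Set Implicit Arguments.
Unset Strict Implicit.
Unset Printing Implicit Defensive.

(** * Transpositions of names *)

Ltac swapn_cases :=
  rewrite /swapn;
  repeat (repeat rewrite eqxx /=;
          match goal with |- context [?x == ?y] =>
            is_var x; is_var y; case: (eqVneq x y) => [?|?]; [subst|] end);
  repeat rewrite eqxx /=;
  try congruence;
  try by match goal with H : is_true (?a != ?a) |- _ => rewrite eqxx in H end.

Lemma swapnL b c : swapn b c b = c.
Proof. by rewrite /swapn eqxx. Qed.

Lemma swapnR b c : swapn b c c = b.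
Proof. by rewrite /swapn eqxx; case: eqP. Qed.

Lemma swapnO b c a : a != b -> a != c -> swapn b c a = a.
Proof. by rewrite /swapn => /negbTE -> /negbTE ->. Qed.

Lemma swapnK b c a : swapn b c (swapn b c a) = a.
Proof. swapn_cases. Qed.

Lemma swapn_id a c : swapn a a c = c.
Proof. swapn_cases. Qed.

Lemma swapnC b c a : swapn b c a = swapn c b a.
Proof. swapn_cases. Qed.

Lemma swapn_conj a b c d e :
  swapn a b (swapn c d e) = swapn (swapn a b c) (swapn a b d) (swapn a b e).
Proof. swapn_cases. Qed.

Lemma swapn_inj b c : injective (swapn b c).
Proof. by move=> x y /(f_equal (swapn b c)); rewrite !swapnK. Qed.

Lemma mem_map_swapn b c a l : (a \in map (swapn b c) l) = (swapn b c a \in l).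
Proof. by rewrite -{1}(swapnK b c a) mem_map //; apply: swapn_inj. Qed.

Section TupleAction.
Variable k : nat.
Implicit Type t : k.-tuple nat.

Lemma map_swapnK b c t : map_tuple (swapn b c) (map_tuple (swapn b c) t) = t.
Proof. by apply: val_inj; rewrite /= -map_comp; apply: map_id_in => x _; apply: swapnK. Qed.

Lemma map_swapn_id a t : map_tuple (swapn a a) t = t.
Proof. by apply: val_inj; apply: map_id_in => x _ /=; apply: swapn_id. Qed.

Lemma map_swapnC b c t : map_tuple (swapn b c) t = map_tuple (swapn c b) t.
Proof. by apply: val_inj; apply: eq_map => x; apply: swapnC. Qed.

Lemma map_swapn_conj a b c d t :
  map_tuple (swapn a b) (map_tuple (swapn c d) t) =
  map_tuple (swapn (swapn a b c) (swapn a b d)) (map_tuple (swapn a b) t).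
Proof. by apply: val_inj; rewrite /= -!map_comp; apply: eq_map => x; apply: swapn_conj. Qed.

Lemma map_swapn_fix b c t : b \notin t -> c \notin t -> map_tuple (swapn b c) t = t.
Proof.
move=> hb hc; apply: val_inj; apply: map_id_in => x xt; apply: swapnO.
- by apply: contraNneq hb => <-.
- by apply: contraNneq hc => <-.
Qed.
End TupleAction.

Definition fresh (l : seq nat) : nat := (foldr maxn 0 l).+1.

Lemma fresh_gt l a : a \in l -> a < fresh l.
Proof.
rewrite /fresh ltnS; elim: l => //= b l IH; rewrite inE => /orP [/eqP ->|/IH h].
  exact: leq_maxl.
exact: leq_trans h (leq_maxr _ _).
Qed.

Lemma fresh_notin l : fresh l \notin l.
Proof. by apply/negP => /fresh_gt; rewrite ltnn. Qed.

(** * Nominal sets presented by transpositions *)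

Definition nominal (X : pset) : Prop :=
  [/\ (forall b c (x : X), swp X b c (swp X b c x) = x),
      (forall a (x : X), swp X a a x = x),
      (forall b c (x : X), swp X b c x = swp X c b x),
      (forall a b c d (x : X),
          swp X a b (swp X c d x) = swp X (swapn a b c) (swapn a b d) (swp X a b x)) &
      (forall x : X, exists l, supports l x)].

Definition equivariant (X Y : pset) (f : X -> Y) : Prop :=
  forall b c x, f (swp X b c x) = swp Y b c (f x).

Definition classicb (P : Prop) : bool :=
  if excluded_middle_informative P then true else false.

Lemma classicbE P : classicb P <-> P.
Proof. by rewrite /classicb; case: excluded_middle_informative. Qed.

Lemma supports_sub (X : pset) l l' (x : X) :
  supports l x -> {subset l <= l'} -> supports l' x.
Proof. by move=> H sub b c hb hc; apply: H; apply/negP => /sub; apply/negP. Qed.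

Section NominalSet.
Variable X : pset.
Hypothesis HX : nominal X.
Implicit Types x y : X.

Lemma swpK b c x : swp X b c (swp X b c x) = x.
Proof. by case: HX. Qed.

Lemma swp_id a x : swp X a a x = x.
Proof. by case: HX. Qed.

Lemma swpC b c x : swp X b c x = swp X c b x.
Proof. by case: HX. Qed.

Lemma swp_conj a b c d x :
  swp X a b (swp X c d x) = swp X (swapn a b c) (swapn a b d) (swp X a b x).
Proof. by case: HX. Qed.

Lemma swp_transpose_via b c d x : c != b -> d != b -> d != c ->
  swp X b d (swp X c d (swp X b d x)) = swp X b c x.
Proof.
move=> cb db dc; rewrite swp_conj swapnR swpK.
have cd : c != d by rewrite eq_sym.
by rewrite swapnO // swpC.
Qed.

(* Supports are closed under intersection: (b c) = (b d)(c d)(b d) with d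
   fresh, and each of these transpositions fixes x by one of the supports. *)
Lemma supports_cap l1 l2 x :
  supports l1 x -> supports l2 x -> supports [seq a <- l1 | a \in l2] x.
Proof.
move=> H1 H2 b c hb hc.
case: (eqVneq b c) => [<-|bc]; first exact: swp_id.
set d := fresh (l1 ++ l2 ++ [:: b; c]).
have := fresh_notin (l1 ++ l2 ++ [:: b; c]); rewrite -/d !mem_cat !inE !negb_or.
case/and3P => d1 d2 /andP [db dc].
have fixd e : e \notin [seq a <- l1 | a \in l2] -> swp X e d x = x.
  by rewrite mem_filter negb_and => /orP [e2|e1]; [apply: H2|apply: H1].
by rewrite -(swp_transpose_via x _ db dc) 1?eq_sym // !fixd.
Qed.

Lemma supports_rem (s l : seq nat) x :
  (forall a, a \in s -> ~ in_supp x a) -> supports l x ->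
  supports [seq a <- l | a \notin s] x.
Proof.
elim: s l => [|a s IH] l Hs Hl.
  by apply: (supports_sub Hl) => y; rewrite mem_filter.
have [l' Hl'] := not_all_ex_not _ _ (Hs a (mem_head a s)).
have [{}Hl' al'] := imply_to_and _ _ Hl'.
have Hs' b (hb : b \in s) : ~ in_supp x b by apply: Hs; rewrite inE hb orbT.
apply: (supports_sub (supports_cap (IH l Hs' Hl) Hl')) => y.
rewrite !mem_filter inE negb_or => /and3P [yl' ys yl].
by rewrite ys yl !andbT; apply: contraTneq yl' => ->; apply/negP.
Qed.

Lemma least_support_exists x :
  exists l, [/\ uniq l, (forall a, a \in l <-> in_supp x a) & supports l x].
Proof.
have [l0 H0] : exists l, supports l x by case: HX.
set s := [seq a <- l0 | ~~ classicb (in_supp x a)].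
have Hs a : a \in s -> ~ in_supp x a.
  by rewrite mem_filter => /andP [/negP h _] /classicbE.
exists (undup [seq a <- l0 | a \notin s]); split; first exact: undup_uniq.
- move=> a; rewrite mem_undup !mem_filter negb_and negbK; split.
    by case/andP => /orP [/classicbE|/negP].
  by move=> h; rewrite (h l0 H0) andbT; apply/orP; left; apply/classicbE.
- by apply: (supports_sub (supports_rem Hs H0)) => y; rewrite mem_undup.
Qed.
End NominalSet.

Definition supp_seq (X : pset) (x : X) : seq nat :=
  match excluded_middle_informative
          (exists l, uniq l /\ (forall a, a \in l <-> in_supp x a)) with
  | left H => proj1_sig (constructive_indefinite_description _ H)
  | right _ => [::]
  end.

Section SupportSeq.
Variable X : pset.
Hypothesis HX : nominal X.
Implicit Types x y : X.

Lemma supp_seqP x :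
  uniq (supp_seq x) /\ (forall a, a \in supp_seq x <-> in_supp x a).
Proof.
rewrite /supp_seq; case: excluded_middle_informative => [H|H].
  by case: (constructive_indefinite_description _ H).
by case: H; have [l [? ? _]] := least_support_exists HX x; exists l.
Qed.

Lemma supp_seq_uniq x : uniq (supp_seq x).
Proof. by case: (supp_seqP x). Qed.

Lemma mem_supp_seq x a : a \in supp_seq x <-> in_supp x a.
Proof. by case: (supp_seqP x). Qed.

Lemma notin_supp_seq x a : a \notin supp_seq x -> ~ in_supp x a.
Proof. by move=> /negP h /mem_supp_seq. Qed.

Lemma supports_supp_seq x : supports (supp_seq x) x.
Proof.
have [l [_ Hl Hsupp]] := least_support_exists HX x.
by apply: (supports_sub Hsupp) => a /Hl /mem_supp_seq.
Qed.

Lemma swp_fix b c x : ~ in_supp x b -> ~ in_supp x c -> swp X b c x = x.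
Proof.
by move=> hb hc; apply: supports_supp_seq; apply/negP => /mem_supp_seq.
Qed.

Lemma supports_swp l b c x :
  supports l x -> supports (map (swapn b c) l) (swp X b c x).
Proof.
move=> H d e; rewrite !mem_map_swapn => hd he.
by rewrite -{1}(swapnK b c d) -{1}(swapnK b c e) -swp_conj // H.
Qed.

Lemma in_supp_swp b c x a : in_supp (swp X b c x) a <-> in_supp x (swapn b c a).
Proof.
split=> H l Hl.
- by rewrite -mem_map_swapn; apply: H; apply: supports_swp.
- have := supports_swp (b := b) (c := c) Hl; rewrite swpK // => /H.
  by rewrite mem_map_swapn swapnK.
Qed.

Lemma fresh_of_swp_fix d e y : swp X d e y = y -> ~ in_supp y e -> ~ in_supp y d.
Proof. by move=> E He Hd; apply: He; rewrite -E in_supp_swp swapnR. Qed.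

Lemma fresh_for2 x y (l : seq nat) :
  exists c, [/\ c \notin l, ~ in_supp x c & ~ in_supp y c].
Proof.
have := fresh_notin (l ++ supp_seq x ++ supp_seq y).
rewrite !mem_cat !negb_or => /and3P [h1 h2 h3].
by exists (fresh (l ++ supp_seq x ++ supp_seq y)); split => //; apply: notin_supp_seq.
Qed.

Lemma fresh_for3 x y (w : X) (l : seq nat) :
  exists c, [/\ c \notin l, ~ in_supp x c, ~ in_supp y c & ~ in_supp w c].
Proof.
have := fresh_notin (l ++ supp_seq x ++ supp_seq y ++ supp_seq w).
rewrite !mem_cat !negb_or => /and4P [h1 h2 h3 h4].
by exists (fresh (l ++ supp_seq x ++ supp_seq y ++ supp_seq w)); split => //;
  apply: notin_supp_seq.
Qed.

Lemma in_supp_equivariant (Y : pset) (f : X -> Y) x a :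
  equivariant f -> in_supp (f x) a -> in_supp x a.
Proof.
move=> Hf H; apply/mem_supp_seq; apply: H => b c hb hc.
by rewrite -Hf supports_supp_seq.
Qed.
End SupportSeq.

(** * Name abstraction *)

Definition alpha (X : pset) (a : nat) (x : X) (b : nat) (y : X) : Prop :=
  alpha_cls a x (b, y).

Lemma abs_rep_spec (X : pset) (t : abs_car X) :
  t = abs_mk (abs_rep t).1 (abs_rep t).2.
Proof.
rewrite /abs_rep /abs_mk /=.
case: (constructive_indefinite_description _ _) => a /= Ha.
case: (constructive_indefinite_description _ _) => x /= Hx.
by case: t Ha Hx => P HP /= Ha Hx; apply: subset_eq_compat.
Qed.

Lemma abs_ind (X : pset) (P : abs_car X -> Prop) :
  (forall a x, P (abs_mk a x)) -> forall t, P t.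
Proof. by move=> H t; rewrite (abs_rep_spec t). Qed.

Section Abstraction.
Variable X : pset.
Hypothesis HX : nominal X.
Implicit Types x y w : X.

(* Alpha-equivalence does not depend on the choice of the fresh name: the
   "some/any" property of the freshness quantifier. *)
Lemma alpha_all a x b y : alpha a x b y ->
  forall c, c != a -> c != b -> ~ in_supp x c -> ~ in_supp y c ->
  swp X a c x = swp X b c y.
Proof.
have move_fresh d c0 c w : c0 != d -> c != d -> ~ in_supp w c0 -> ~ in_supp w c ->
    swp X c0 c (swp X d c0 w) = swp X d c w.
  move=> h1 h2 h3 h4; rewrite swp_conj // swapnL swapnO 1?eq_sym //.
  by rewrite (swp_fix HX h3 h4).
case=> c0 /= [h1 h2 h3 h4 E] c ca cb cx cy.
case: (eqVneq c c0) => [->//|cc0].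
by rewrite -(move_fresh a c0 c x) // -(move_fresh b c0 c y) // E.
Qed.

Lemma alpha_intro a x b y :
  (forall c, c != a -> c != b -> ~ in_supp x c -> ~ in_supp y c ->
     swp X a c x = swp X b c y) ->
  alpha a x b y.
Proof.
move=> H; have [c [hl hx hy]] := fresh_for2 HX x y [:: a; b].
by move: hl; rewrite !inE negb_or => /andP [ca cb]; exists c; split => //; apply: H.
Qed.

Lemma alpha_trans a x b y d w : alpha a x b y -> alpha b y d w -> alpha a x d w.
Proof.
move=> H1 H2; have [c [hl hx hy hw]] := fresh_for3 HX x y w [:: a; b; d].
move: hl; rewrite !inE !negb_or => /and3P [ca cb cd].
by exists c; split => //=; rewrite (alpha_all H1) // (alpha_all H2).
Qed.

Lemma alpha_sym a x b y : alpha a x b y -> alpha b y a x.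
Proof. by move=> H; apply: alpha_intro => c *; symmetry; apply: (alpha_all H). Qed.

Lemma abs_eq a x b y : abs_mk a x = abs_mk b y <-> alpha a x b y.
Proof.
split.
- move/(f_equal (@proj1_sig _ _)) => /= E; rewrite /alpha E.
  exact: alpha_intro.
- move=> H; apply: subset_eq_compat; apply: functional_extensionality => -[c z].
  apply: propositional_extensionality; split; first exact: alpha_trans (alpha_sym H).
  exact: alpha_trans H.
Qed.

Lemma abs_inj a x y : abs_mk a x = abs_mk a y -> x = y.
Proof.
move/abs_eq => H; have [c [hl hx hy]] := fresh_for2 HX x y [:: a].
move: hl; rewrite inE => ca.
by have /(f_equal (swp X a c)) := alpha_all H ca ca hx hy; rewrite !swpK.
Qed.

Lemma abs_rename a b x : ~ in_supp x b -> abs_mk a x = abs_mk b (swp X a b x).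
Proof.
move=> hb; case: (eqVneq a b) => [<-|ab]; first by rewrite swp_id.
apply/abs_eq; apply: alpha_intro => c ca cb cx cy.
have ac : a != c by rewrite eq_sym.
by rewrite swp_conj // swapnL swapnO // (swp_fix HX hb cx).
Qed.

Lemma abs_rename_or_eq a b x :
  b = a \/ ~ in_supp x b -> abs_mk a x = abs_mk b (swp X a b x).
Proof. by case=> [->|h]; [rewrite swp_id | apply: abs_rename]. Qed.

Lemma swp_abs b c a x :
  swp (absP X) b c (abs_mk a x) = abs_mk (swapn b c a) (swp X b c x).
Proof.
have alpha_swp a1 x1 a2 x2 : alpha a1 x1 a2 x2 ->
    alpha (swapn b c a1) (swp X b c x1) (swapn b c a2) (swp X b c x2).
  case=> d /= [h1 h2 h3 h4 E]; exists (swapn b c d); split => /=.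
  - by rewrite (inj_eq (@swapn_inj b c)).
  - by rewrite (inj_eq (@swapn_inj b c)).
  - by rewrite in_supp_swp // swapnK.
  - by rewrite in_supp_swp // swapnK.
  - by rewrite -!swp_conj // E.
apply/abs_eq/alpha_swp/abs_eq.
by rewrite -abs_rep_spec.
Qed.

Lemma supports_abs a x :
  @supports (absP X) [seq d <- supp_seq x | d != a] (abs_mk a x).
Proof.
move=> b c; rewrite !mem_filter !negb_and !negbK => hb hc; rewrite swp_abs.
case: (eqVneq b c) => [<-|bc]; first by rewrite swapn_id swp_id.
case: (eqVneq b a) => [Eb|ba]; case: (eqVneq c a) => [Ec|ca].
- by move: bc; rewrite Eb Ec eqxx.
- subst b; rewrite swapnL; symmetry; apply: abs_rename.
  by apply: notin_supp_seq; move: hc; rewrite (negbTE ca).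
- subst c; rewrite swapnR swpC //; symmetry; apply: abs_rename.
  by apply: notin_supp_seq; move: hb; rewrite (negbTE ba).
- rewrite swapnO 1?eq_sym // swp_fix //.
  + by apply: notin_supp_seq; move: hb; rewrite (negbTE ba).
  + by apply: notin_supp_seq; move: hc; rewrite (negbTE ca).
Qed.

Lemma in_supp_abs a x d : @in_supp (absP X) (abs_mk a x) d <-> d != a /\ in_supp x d.
Proof.
split.
- move=> /(_ _ (@supports_abs a x)); rewrite mem_filter.
  by case/andP => -> /(mem_supp_seq HX).
- move=> [da dx] l Hl; apply: contraT => dl; exfalso.
  have [e [el ex _]] := fresh_for2 HX x x (d :: a :: l).
  move: el; rewrite !inE !negb_or => /and3P [ed ea el].
  have : swp (absP X) d e (abs_mk a x) = abs_mk a x by apply: Hl.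
  rewrite swp_abs swapnO 1?eq_sym // => /abs_inj E.
  exact: (fresh_of_swp_fix HX E ex dx).
Qed.

Lemma nominal_abs : nominal (absP X).
Proof.
split.
- by move=> b c; elim/abs_ind => a x; rewrite !swp_abs swapnK swpK.
- by move=> d; elim/abs_ind => a x; rewrite !swp_abs swapn_id swp_id.
- by move=> b c; elim/abs_ind => a x; rewrite !swp_abs swapnC swpC.
- by move=> a b c d; elim/abs_ind => e x; rewrite !swp_abs swapn_conj swp_conj.
- by elim/abs_ind => a x; eexists; apply: supports_abs.
Qed.

End Abstraction.

Section AbstractionMap.
Variables X Y : pset.
Hypotheses (HX : nominal X) (HY : nominal Y).
Variable f : X -> Y.
Hypothesis Hf : equivariant f.

Lemma abs_map_mk a x : abs_map f (abs_mk a x) = abs_mk a (f x).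
Proof.
rewrite /abs_map; set a' := (abs_rep _).1; set x' := (abs_rep _).2.
have H : alpha a' x' a x by apply/(abs_eq HX); rewrite /a' /x' -abs_rep_spec.
apply/(abs_eq HY); have [c [hl hx hy]] := fresh_for2 HX x' x [:: a'; a].
move: hl; rewrite !inE !negb_or => /andP [ca' ca].
exists c; split => //=.
- by move/(in_supp_equivariant HX Hf).
- by move/(in_supp_equivariant HX Hf).
- by rewrite -!Hf (alpha_all HX H).
Qed.

Lemma equivariant_abs_map : equivariant (abs_map f).
Proof.
by move=> b c; elim/abs_ind => a x; rewrite (swp_abs HX) !abs_map_mk (swp_abs HY) Hf.
Qed.
End AbstractionMap.

(** * Iterated abstraction *)

Lemma nominal_unit : nominal unitP.
Proof. by split=> // x; exists [::] => b c _ _. Qed.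

Lemma nominal_absn k (X : pset) : nominal X -> nominal (absn k X).
Proof. by elim: k => //= k IH HX; apply: nominal_abs; apply: IH. Qed.

Lemma equivariant_absn_map k (X Y : pset) (HX : nominal X) (HY : nominal Y) (f : X -> Y) :
  equivariant f -> equivariant (@absn_map k X Y f).
Proof.
elim: k => //= k IH Hf.
by apply: equivariant_abs_map; try apply: nominal_absn => //; apply: IH.
Qed.

(* Any element of [V]^n 1 is <x^1>...<x^n>*, so [V]^n 1 is trivial. *)
Lemma absn_unit_trivial k (x y : absn k unitP) : x = y.
Proof.
elim: k x y => [|k IH] x y; first by case: x; case: y.
have HU := nominal_absn k nominal_unit.
elim/abs_ind: x => a x; elim/abs_ind: y => b y.
by rewrite (IH x y); apply/(abs_eq HU); apply: alpha_intro => // c *; apply: IH.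
Qed.

Definition swaps (X : pset) (p : seq (nat * nat)) (x : X) : X :=
  foldr (fun bc y => swp X bc.1 bc.2 y) x p.

Lemma swaps_cat (X : pset) p1 p2 (x : X) : swaps (p1 ++ p2) x = swaps p1 (swaps p2 x).
Proof. by rewrite /swaps foldr_cat. Qed.

Lemma swaps_equivariant (X Y : pset) (f : X -> Y) p x :
  equivariant f -> f (swaps p x) = swaps p (f x).
Proof. by move=> Hf; elim: p => //= -[b c] p IH /=; rewrite Hf IH. Qed.

Lemma qn_cons (X : pset) k h (t : k.-tuple nat) (y : X) :
  qn [tuple of h :: t] y = abs_mk h (qn t y).
Proof. by rewrite /= theadE; congr (abs_mk _ (qn _ _)); apply: val_inj. Qed.

Section IteratedAbstraction.
Variable X : pset.
Hypothesis HX : nominal X.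
Implicit Types x y : X.

Lemma in_supp_qn k (t : k.-tuple nat) y d :
  in_supp (qn t y) d <-> d \notin t /\ in_supp y d.
Proof.
elim: k t => [|k IH] t; first by rewrite tuple0; split=> [h|[]].
case/tupleP: t => h t; rewrite qn_cons (in_supp_abs (nominal_absn k HX)) IH.
rewrite inE negb_or; split.
- by case=> h1 [h2 h3]; rewrite h1 h2.
- by case=> /andP [h1 h2] h3.
Qed.

Lemma swp_qn k (t : k.-tuple nat) y b c :
  swp (absn k X) b c (qn t y) = qn (map_tuple (swapn b c) t) (swp X b c y).
Proof.
elim: k t => [|k IH] t; first by rewrite tuple0.
case/tupleP: t => h t; rewrite qn_cons (swp_abs (nominal_absn k HX)) IH.
by rewrite -qn_cons; congr qn; apply: val_inj.
Qed.

Lemma qn_swaps k (t t' : k.-tuple nat) y y' :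
  qn t y = qn t' y' -> exists p, y' = swaps p y.
Proof.
elim: k t t' y y' => [|k IH] t t' y y'; first by move=> /= ->; exists [::].
case/tupleP: t => h t; case/tupleP: t' => h' t'; rewrite !qn_cons.
have HXk := nominal_absn k HX.
move/(abs_eq HXk) => Halpha.
have [c [hl hx hy]] := fresh_for2 HXk (qn t y) (qn t' y') [:: h; h'].
move: hl; rewrite !inE !negb_or => /andP [ch ch'].
have := alpha_all HXk Halpha ch ch' hx hy; rewrite !swp_qn => /IH [p Hp].
by exists ((h', c) :: p ++ [:: (h, c)]); rewrite /= swaps_cat /= -Hp swpK.
Qed.

Lemma qn_rename k (t s : k.-tuple nat) y :
  uniq s -> (forall j, j \in s -> j \notin t) ->
  (forall j, j \in s -> ~ in_supp (qn t y) j) ->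
  exists p, qn t y = qn s (swaps p y).
Proof.
elim: k t s y => [|k IH] t s y; first by exists [::].
case/tupleP: t => h t; case/tupleP: s => g s; rewrite !qn_cons.
have HXk := nominal_absn k HX.
rewrite [uniq _]/= => /andP [gs us] Hst Hsupp.
have gh : g != h by apply: contraTneq (Hst g (mem_head _ _)) => ->; rewrite mem_head.
have gY : ~ in_supp (qn t y) g.
  by move=> H; apply: (Hsupp g (mem_head _ _)); apply/(in_supp_abs HXk).
have old j : j \in s -> [/\ j != g, j != h & j \notin t].
  move=> js; have := Hst j; rewrite !inE js orbT negb_or => /(_ isT) /andP [-> ->].
  by split=> //; apply: contraNneq gs => <-.
rewrite (abs_rename HXk h gY) swp_qn.
have [p Hp] : exists p, qn (map_tuple (swapn h g) t) (swp X h g y) =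
                        qn s (swaps p (swp X h g y)).
  apply: IH => // j js; have [jg jh jt] := old j js.
    by rewrite /= mem_map_swapn swapnO.
  rewrite -swp_qn in_supp_swp ?swapnO // => H.
  by apply: (Hsupp j); [rewrite inE js orbT | apply/(in_supp_abs HXk)].
by exists (p ++ [:: (h, g)]); rewrite qn_cons Hp swaps_cat.
Qed.

Section Lifting.
Variable Y : pset.
Hypothesis HY : nominal Y.
Variable f : X -> Y.
Hypothesis Hf : equivariant f.

Lemma absn_map_qn k (t : k.-tuple nat) y : absn_map f (qn t y) = qn t (f y).
Proof.
elim: k t => [|k IH] t //=.
rewrite abs_map_mk; try apply: nominal_absn => //; last exact: equivariant_absn_map.
by rewrite IH.
Qed.

Lemma absn_map_lift k (t : k.-tuple nat) (K : absn k X) (y0 : Y) :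
  uniq t -> (forall j, j \in t -> ~ in_supp K j) -> absn_map f K = qn t y0 ->
  exists y, K = qn t y /\ f y = y0.
Proof.
elim: k t K y0 => [|k IH] t K y0; first by move=> _ _ /= E; exists K.
have HXk := nominal_absn k HX; have HYk := nominal_absn k HY.
case/tupleP: t => h t; rewrite qn_cons [uniq _]/= => /andP [ht ut].
elim/abs_ind: K => a Y0 Hsupp.
have Hren : h = a \/ ~ in_supp Y0 h.
  case: (eqVneq h a) => [->|ha]; [by left|right] => H.
  by apply: (Hsupp h (mem_head _ _)); apply/(in_supp_abs HXk).
rewrite (abs_rename_or_eq HXk Hren) /= abs_map_mk //; last exact: equivariant_absn_map.
move/(abs_inj HYk) => E.
have [y [Ey Efy]] : exists y, swp (absn k X) a h Y0 = qn t y /\ f y = y0.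
  apply: IH => // j jt Hj; apply: (Hsupp j); first by rewrite inE jt orbT.
  rewrite (abs_rename_or_eq HXk Hren); apply/(in_supp_abs HXk); split => //.
  by apply: contraNneq ht => <-.
by exists y; rewrite theadE Ey; split => //; congr (abs_mk _ (qn _ _)); apply: val_inj.
Qed.
End Lifting.
End IteratedAbstraction.

(** * The functors F and F_alpha *)

Lemma in_supp_name (X : pset) (e : nat -> X) a d :
  injective e -> (forall b c a', swp X b c (e a') = e (swapn b c a')) ->
  in_supp (e a) d <-> d = a.
Proof.
move=> e_inj e_swp; split.
- move=> H; have : d \in [:: a].
    by apply: H => b c; rewrite !inE => hb hc; rewrite e_swp swapnO // eq_sym.
  by rewrite inE => /eqP.
- move=> -> l Hl; apply: contraT => al; exfalso.
  have := fresh_notin (a :: l); rewrite inE negb_or => /andP [ea el].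
  have := Hl a _ al el; rewrite e_swp swapnL => /e_inj /eqP.
  by rewrite (negbTE ea).
Qed.

Lemma inr_existT_inj (A I : Type) (P : I -> Type) (o : I) (x y : P o) :
  @inr A _ (existT P o x) = inr (existT P o y) -> x = y.
Proof. by case=> E; apply: inj_pair2 E. Qed.

Lemma mem_flatten_enum K (g : 'I_K -> seq nat) d :
  d \in flatten [seq g i | i <- enum 'I_K] <-> exists i, d \in g i.
Proof.
split; first by case/flatten_mapP => i _ h; exists i.
by case=> i h; apply/flatten_mapP; exists i; rewrite ?mem_enum.
Qed.

Section Functors.
Variables (Op : Type) (ar : Op -> seq nat).

Section OneStep.
Variable X : pset.
Hypothesis HX : nominal X.

Lemma F_inr_ext op (h1 h2 : forall i : 'I_(size (ar op)),
                              ((nth 0 (ar op) i).-tuple nat * X)%type) :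
  (forall i, h1 i = h2 i) -> (inr (existT _ op h1) : F ar X) = inr (existT _ op h2).
Proof. by move=> E; congr (inr (existT _ op _)); apply: functional_extensionality_dep. Qed.

Lemma Fa_inr_ext op (h1 h2 : forall i : 'I_(size (ar op)), absn (nth 0 (ar op) i) X) :
  (forall i, h1 i = h2 i) -> (inr (existT _ op h1) : Fa ar X) = inr (existT _ op h2).
Proof. by move=> E; congr (inr (existT _ op _)); apply: functional_extensionality_dep. Qed.

Lemma in_supp_F_inl a d : @in_supp (F ar X) (inl a) d <-> d = a.
Proof. by apply: in_supp_name => // ? ? []. Qed.

Lemma in_supp_Fa_inl a d : @in_supp (Fa ar X) (inl a) d <-> d = a.
Proof. by apply: in_supp_name => // ? ? []. Qed.

Definition F_names op (h : forall i : 'I_(size (ar op)),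
                          ((nth 0 (ar op) i).-tuple nat * X)%type) : seq nat :=
  flatten [seq val (h i).1 ++ supp_seq (h i).2 | i <- enum 'I_(size (ar op))].

Lemma supports_F op h : @supports (F ar X) (F_names h) (inr (existT _ op h)).
Proof.
move=> b c hb hc /=; apply: F_inr_ext => i.
have names_i d : d \notin F_names h -> d \notin val (h i).1 ++ supp_seq (h i).2.
  by move=> hd; apply: contra hd => hi; apply/mem_flatten_enum; exists i.
move: (names_i _ hb) (names_i _ hc); rewrite !mem_cat !negb_or.
case: (h i) => t x /= /andP [b1 b2] /andP [c1 c2].
by rewrite map_swapn_fix // swp_fix //; apply: notin_supp_seq.
Qed.

Lemma nominal_F : nominal (F ar X).
Proof.
split.
- move=> b c [a|[op h]] /=; first by rewrite swapnK.
  by apply: F_inr_ext => i /=; rewrite map_swapnK swpK //; case: (h i).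
- move=> a [e|[op h]] /=; first by rewrite swapn_id.
  by apply: F_inr_ext => i /=; rewrite map_swapn_id swp_id //; case: (h i).
- move=> b c [e|[op h]] /=; first by rewrite swapnC.
  by apply: F_inr_ext => i /=; rewrite map_swapnC swpC.
- move=> a b c d [e|[op h]] /=; first by rewrite swapn_conj.
  by apply: F_inr_ext => i /=; rewrite map_swapn_conj swp_conj.
- case=> [a|[op h]]; last by eexists; apply: supports_F.
  by exists [:: a] => b c; rewrite !inE => hb hc /=; rewrite swapnO // eq_sym.
Qed.

Lemma in_supp_F_inr op h d :
  @in_supp (F ar X) (inr (existT _ op h)) d <->
  exists i, d \in val (h i).1 \/ in_supp (h i).2 d.
Proof.
split.
- move=> /(_ _ (@supports_F op h)) /mem_flatten_enum [i].
  by rewrite mem_cat => /orP [hi|/(mem_supp_seq HX) hi]; exists i; [left|right].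
- case=> i hi l Hl; apply: contraT => dl; exfalso.
  have := fresh_notin (d :: l ++ val (h i).1 ++ supp_seq (h i).2).
  set e := fresh _; rewrite inE !mem_cat !negb_or => /and4P [ed el et ex].
  have /= Ei := congr1 (fun g => g i) (inr_existT_inj (Hl d e dl el)).
  case: hi => [dt|dx].
  + by move: et; rewrite -{1}(congr1 fst Ei) /= mem_map_swapn swapnR dt.
  + exact: (fresh_of_swp_fix HX (congr1 snd Ei) (notin_supp_seq HX ex) dx).
Qed.

Definition Fa_names op (h : forall i : 'I_(size (ar op)), absn (nth 0 (ar op) i) X) :=
  flatten [seq supp_seq (h i) | i <- enum 'I_(size (ar op))].

Lemma supports_Fa op h : @supports (Fa ar X) (Fa_names h) (inr (existT _ op h)).
Proof.
move=> b c hb hc /=; apply: Fa_inr_ext => i.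
have names_i d : d \notin Fa_names h -> d \notin supp_seq (h i).
  by move=> hd; apply: contra hd => hi; apply/mem_flatten_enum; exists i.
have HXi := nominal_absn (nth 0 (ar op) i) HX.
by rewrite (swp_fix HXi) //; apply: (notin_supp_seq HXi); apply: names_i.
Qed.

Lemma nominal_Fa : nominal (Fa ar X).
Proof.
have HXk k := nominal_absn k HX.
split.
- move=> b c [a|[op h]] /=; first by rewrite swapnK.
  by apply: Fa_inr_ext => i /=; rewrite swpK.
- move=> a [e|[op h]] /=; first by rewrite swapn_id.
  by apply: Fa_inr_ext => i /=; rewrite swp_id.
- move=> b c [e|[op h]] /=; first by rewrite swapnC.
  by apply: Fa_inr_ext => i /=; rewrite swpC.
- move=> a b c d [e|[op h]] /=; first by rewrite swapn_conj.
  by apply: Fa_inr_ext => i /=; rewrite swp_conj.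
- case=> [a|[op h]]; last by eexists; apply: supports_Fa.
  by exists [:: a] => b c; rewrite !inE => hb hc /=; rewrite swapnO // eq_sym.
Qed.

Lemma in_supp_Fa_inr op h d :
  @in_supp (Fa ar X) (inr (existT _ op h)) d <-> exists i, in_supp (h i) d.
Proof.
have HXk k := nominal_absn k HX.
split.
- move=> /(_ _ (@supports_Fa op h)) /mem_flatten_enum [i].
  by move/(mem_supp_seq (HXk _)) => hi; exists i.
- case=> i hi l Hl; apply: contraT => dl; exfalso.
  have := fresh_notin (d :: l ++ supp_seq (h i)).
  set e := fresh _; rewrite inE !mem_cat !negb_or => /and3P [ed el ex].
  have /= Ei := congr1 (fun g => g i) (inr_existT_inj (Hl d e dl el)).
  exact: (fresh_of_swp_fix (HXk _) Ei (notin_supp_seq (HXk _) ex) hi).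
Qed.

Lemma equivariant_q : equivariant (@q Op ar X).
Proof. by move=> b c [a|[op h]] //=; apply: Fa_inr_ext => i /=; rewrite swp_qn. Qed.
End OneStep.

Lemma equivariant_Fmap (X Y : pset) (f : X -> Y) :
  equivariant f -> equivariant (@Fmap Op ar X Y f).
Proof. by move=> Hf b c [a|[op h]] //=; apply: F_inr_ext => i /=; rewrite Hf. Qed.

Lemma equivariant_Famap (X Y : pset) (HX : nominal X) (HY : nominal Y) (f : X -> Y) :
  equivariant f -> equivariant (@Famap Op ar X Y f).
Proof.
move=> Hf b c [a|[op h]] //=; apply: Fa_inr_ext => i /=.
by rewrite equivariant_absn_map.
Qed.

Lemma nominal_Fn n : nominal (Fn ar n).
Proof. by elim: n => [|n IH] /=; [exact: nominal_unit | exact: nominal_F]. Qed.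

Lemma nominal_Fan n : nominal (Fan ar n).
Proof. by elim: n => [|n IH] /=; [exact: nominal_unit | exact: nominal_Fa]. Qed.

Lemma equivariant_Fabang n : equivariant (Fabang ar n).
Proof.
elim: n => [|n IH] //=.
exact: (equivariant_Famap (nominal_Fan n.+1) (nominal_Fan n) IH).
Qed.

Lemma equivariant_amap n : equivariant (amap ar n).
Proof.
elim: n => [|n IH] //= b c u.
by rewrite (equivariant_Fmap IH) (equivariant_q (nominal_Fan n)).
Qed.

Lemma square_commutes n (z : Fn ar n.+1) :
  amap ar n (Fbang ar n z) = Fabang ar n (amap ar n.+1 z).
Proof.
elim: n z => [|n IH] [a|[op h]] //=; apply: Fa_inr_ext => i /=.
by rewrite (absn_map_qn (nominal_Fan n.+1) (nominal_Fan n) (@equivariant_Fabang n)) IH.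
Qed.
End Functors.

(** * Finite sequences of names *)

Lemma uniq_flatten_map (I T : eqType) (g : I -> seq T) (s : seq I) : uniq s ->
  uniq (flatten (map g s)) <->
  (forall i, i \in s -> uniq (g i)) /\
  (forall i j a, i \in s -> j \in s -> i != j -> a \in g i -> a \notin g j).
Proof.
elim: s => [|i s IH] /=; first by split => // _; split.
case/andP => nis us; rewrite cat_uniq; split.
- case/and3P => ui /hasPn hn /(IH us) [Hu Hd].
  have notin_rest j a : j \in s -> a \in g j -> a \notin g i.
    by move=> js aj; apply: hn; apply/flatten_mapP; exists j.
  split; first by move=> j; rewrite inE => /orP [/eqP ->|/Hu].
  move=> j1 j2 a; rewrite !inE => /orP [/eqP ->|j1s] /orP [/eqP ->|j2s].
  + by rewrite eqxx.
  + by move=> _ ai; apply: contraL ai; apply: notin_rest.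
  + by move=> _; apply: notin_rest.
  + exact: Hd.
- case=> Hu Hd; rewrite Hu ?mem_head //=; apply/andP; split; last first.
    apply/(IH us); split; first by move=> j js; apply: Hu; rewrite inE js orbT.
    by move=> j1 j2 a j1s j2s; apply: Hd; rewrite inE ?j1s ?j2s orbT.
  apply/hasPn => a /flatten_mapP [j js aj].
  have ij : j != i by apply: contraNneq nis => <-.
  exact: (Hd j i a (@mem_behead _ (i :: s) j js) (mem_head _ _) ij aj).
Qed.

Lemma uniq_flatten_enum K (g : 'I_K -> seq nat) :
  uniq (flatten [seq g i | i <- enum 'I_K]) <->
  (forall i, uniq (g i)) /\ (forall i j a, i != j -> a \in g i -> a \notin g j).
Proof.
rewrite uniq_flatten_map ?enum_uniq //; split.
- by case=> H1 H2; split=> [i|i j a]; [apply: H1|apply: H2]; rewrite mem_enum.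
- by case=> H1 H2; split=> [i _|i j a _ _]; [apply: H1|apply: H2].
Qed.

Definition fresh_tuple (L : seq nat) (k : nat) : k.-tuple nat :=
  Tuple (introT eqP (size_iota (fresh L) k)).

Lemma fresh_tupleP L k :
  uniq (fresh_tuple L k) /\ forall a, a \in fresh_tuple L k -> a \notin L.
Proof.
split=> [|a]; first exact: iota_uniq.
by rewrite mem_iota => /andP [h _]; apply/negP => /fresh_gt; rewrite ltnNge h.
Qed.

(* Choosing one object per index with pairwise disjoint sets of names: if for
   each i an object satisfying Q i can be found whose names avoid any given
   finite list, then such objects can be found simultaneously for all i,
   avoiding L and with pairwise disjoint names (choose them one after the
   other, each avoiding the names of the previous ones). *)
Lemma disjoint_choice K (T : 'I_K -> Type) (Q : forall i, T i -> Prop)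
    (names : forall i, T i -> seq nat) :
  (forall i (L : seq nat), exists w, Q i w /\ forall a, a \in names i w -> a \notin L) ->
  forall L : seq nat, exists ws : forall i, T i,
    [/\ forall i, Q i (ws i),
        forall i a, a \in names i (ws i) -> a \notin L &
        forall i j a, i != j -> a \in names i (ws i) -> a \notin names j (ws j)].
Proof.
move=> H L.
pose ch i L := proj1_sig (constructive_indefinite_description _ (H i L)).
have chP i L' : Q i (ch i L') /\ forall a, a \in names i (ch i L') -> a \notin L'.
  by rewrite /ch; case: constructive_indefinite_description.
pose fix used (m : nat) : seq nat :=
  if m is m'.+1 then used m' ++ (if insub m' is Some i then names i (ch i (used m'))
                                 else [::])
  else L.
have used_mono m m' : m <= m' -> {subset used m <= used m'}.
  move=> /subnK <-; elim: (m' - m) => //= d IHd a /IHd.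
  by rewrite mem_cat => ->.
have used_later (i j : 'I_K) a : j < i -> a \in names j (ch j (used j)) -> a \in used i.
  by move=> ji aj; apply: (used_mono j.+1) => //=; rewrite valK mem_cat aj orbT.
exists (fun i => ch i (used i)); split.
- by move=> i; case: (chP i (used i)).
- move=> i a /(proj2 (chP i (used i))); apply: contra.
  exact: (used_mono 0).
- move=> i j a; case: (ltngtP i j) => [ij|ji|/val_inj ->]; last by rewrite eqxx.
  + move=> _ ai; apply/negP => aj.
    by move: (proj2 (chP j (used j)) a aj); rewrite (used_later _ _ _ ij ai).
  + move=> _ ai; apply/negP => aj.
    by move: (proj2 (chP i (used i)) a ai); rewrite (used_later _ _ _ ji aj).
Qed.

(** * Binders of raw terms and safety *)

Section RawTerms.
Variables (Op : Type) (ar : Op -> seq nat).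

Fixpoint binders (n : nat) : Fn ar n -> seq nat :=
  match n return Fn ar n -> seq nat with
  | 0 => fun _ => [::]
  | m.+1 => fun u => match u with
      | inl _ => [::]
      | inr (existT op h) =>
          flatten [seq val (h i).1 ++ @binders m (h i).2 | i <- enum 'I_(size (ar op))]
      end
  end.

Definition fresh_binders n (w : Fn ar n) : Prop :=
  uniq (binders w) /\ forall a, a \in binders w -> ~ in_supp (amap ar n w) a.

Lemma in_supp_raw n (w : Fn ar n) d :
  in_supp w d <-> in_supp (amap ar n w) d \/ d \in binders w.
Proof.
elim: n w => [|n IH] w /=; first by split; [left|case].
have HF := nominal_Fn ar n; have HFa := nominal_Fan ar n.
case: w => [a|[op h]].
  by rewrite in_supp_F_inl in_supp_Fa_inl in_nil; split; [left|case].
rewrite (in_supp_F_inr HF) (in_supp_Fa_inr HFa) /=; split.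
- case=> i hi; case dt: (d \in val (h i).1).
    by right; apply/mem_flatten_enum; exists i; rewrite mem_cat dt.
  case: hi => [di|/IH [hx|hb]]; first by rewrite di in dt.
    by left; exists i; apply/(in_supp_qn HFa); rewrite dt.
  by right; apply/mem_flatten_enum; exists i; rewrite mem_cat hb orbT.
- case=> [[i /(in_supp_qn HFa) [_ hi]]|/mem_flatten_enum [i]].
    by exists i; right; apply/IH; left.
  by rewrite mem_cat => /orP [dt|dx]; exists i; [left|right; apply/IH; right].
Qed.

Lemma binders_swp n (w : Fn ar n) b c :
  binders (swp (Fn ar n) b c w) = map (swapn b c) (binders w).
Proof.
elim: n w => [|n IH] // [a|[op h]] //=.
rewrite map_flatten -map_comp; congr flatten; apply: eq_map => i /=.
by rewrite IH map_cat.
Qed.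

Lemma size_binders_swaps n (w : Fn ar n) p : size (binders (swaps p w)) = size (binders w).
Proof. by elim: p => //= -[b c] p IH; rewrite binders_swp size_map. Qed.

Lemma size_binders_alpha n (w w' : Fn ar n) :
  amap ar n w = amap ar n w' -> size (binders w) = size (binders w').
Proof.
elim: n w w' => [|n IH] // [a|[op h]] [a'|[op' h']] //= E0.
have Eop : op = op' by case: E0.
subst op'; have {E0}E := inr_existT_inj E0.
have sizes i :
    size (val (h i).1 ++ binders (h i).2) = size (val (h' i).1 ++ binders (h' i).2).
  rewrite !size_cat !size_tuple; congr addn.
  have [p Hp] := qn_swaps (nominal_Fan ar n) (congr1 (fun g => g i) E).
  rewrite -(size_binders_swaps _ p); apply: IH.
  by rewrite Hp swaps_equivariant //; apply: equivariant_amap.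
by rewrite !size_flatten /shape -!map_comp; congr sumn; apply: eq_map.
Qed.

Lemma supp_size_le n (w : Fn ar n) k :
  supp_size w k -> k <= size (supp_seq (amap ar n w) ++ binders w).
Proof.
case=> l [ul Hl <-]; apply: uniq_leq_size => // a /Hl /in_supp_raw [h|h].
  by rewrite mem_cat; apply/orP; left; apply/(mem_supp_seq (nominal_Fan ar n)).
by rewrite mem_cat h orbT.
Qed.

Lemma fresh_binders_supp_size n (w : Fn ar n) :
  fresh_binders w -> supp_size w (size (supp_seq (amap ar n w) ++ binders w)).
Proof.
have HFa := nominal_Fan ar n.
case=> ub Hb; exists (supp_seq (amap ar n w) ++ binders w); split => //.
- rewrite cat_uniq ub supp_seq_uniq // andbT.
  by apply/hasPn => a /Hb h; apply/negP => /(mem_supp_seq HFa).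
- move=> a; rewrite mem_cat in_supp_raw; split.
    by case/orP => [/(mem_supp_seq HFa)|]; [left|right].
  by case=> [/(mem_supp_seq HFa) ->|->]; rewrite ?orbT.
Qed.

Lemma supp_size_fresh_binders n (w : Fn ar n) :
  supp_size w (size (supp_seq (amap ar n w) ++ binders w)) -> fresh_binders w.
Proof.
have HFa := nominal_Fan ar n.
case=> l [ul Hl Hsz].
have : uniq (supp_seq (amap ar n w) ++ binders w).
  apply: (leq_size_uniq ul); last by rewrite Hsz.
  move=> a /Hl /in_supp_raw [h|h]; rewrite mem_cat; apply/orP; last by right.
  by left; apply/(mem_supp_seq HFa).
rewrite cat_uniq => /and3P [_ /hasPn Hn ub]; split => // a ab Ha.
by move/negP: (Hn a ab); apply; apply/(mem_supp_seq HFa).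
Qed.

Lemma fresh_binders_inr n op
    (h : forall i : 'I_(size (ar op)), ((nth 0 (ar op) i).-tuple nat * Fn ar n)%type) :
  fresh_binders (inr (existT _ op h) : Fn ar n.+1) <->
  [/\ forall i, uniq (val (h i).1 ++ binders (h i).2),
      forall i j a, i != j -> a \in val (h i).1 ++ binders (h i).2 ->
                    a \notin val (h j).1 ++ binders (h j).2 &
      forall i a, a \in val (h i).1 ++ binders (h i).2 ->
                  ~ in_supp (amap ar n.+1 (inr (existT _ op h))) a].
Proof.
rewrite /fresh_binders [binders _]/= uniq_flatten_enum; split.
- case=> [[Hu Hd] Hs]; split => // i a ai.
  by apply: Hs; apply/mem_flatten_enum; exists i.
- case=> Hu Hd Hs; split => // a /mem_flatten_enum [i]; exact: Hs.
Qed.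

Definition refreshable n : Prop :=
  forall (u : Fn ar n) (L : seq nat), exists w : Fn ar n,
    [/\ amap ar n w = amap ar n u, fresh_binders w &
        forall a, a \in binders w -> a \notin L].

(* One component (t, x) of a node is refreshed by renaming the abstracted
   names t into fresh names s and refreshing the body. *)
Lemma refresh_component n : refreshable n ->
  forall k (t : k.-tuple nat) (x : Fn ar n) (L : seq nat),
  exists sw : (k.-tuple nat * Fn ar n)%type,
    [/\ qn sw.1 (amap ar n sw.2) = qn t (amap ar n x),
        uniq (val sw.1 ++ binders sw.2) &
        forall a, a \in val sw.1 ++ binders sw.2 -> a \notin L].
Proof.
move=> IH k t x L; have HFa := nominal_Fan ar n.
set M := L ++ supp_seq (qn t (amap ar n x)) ++ val t.
have [us Hs] := fresh_tupleP M k; set s := fresh_tuple M k in us Hs *.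
have [p Hp] : exists p, qn t (amap ar n x) = qn s (swaps p (amap ar n x)).
  apply: qn_rename => // j /Hs; rewrite !mem_cat !negb_or => /and3P [_ jS jt] //.
  exact: (notin_supp_seq (nominal_absn k HFa) jS).
have [w [Ew [uw _] Lw]] := IH (swaps p x) (L ++ val s).
exists (s, w); split => /=.
- by rewrite Hp Ew swaps_equivariant //; apply: equivariant_amap.
- rewrite cat_uniq us uw andbT /=; apply/hasPn => a /Lw.
  by rewrite mem_cat negb_or => /andP [].
- by move=> a; rewrite mem_cat => /orP [/Hs|/Lw]; rewrite !mem_cat !negb_or => /andP [].
Qed.

Lemma refresh n : refreshable n.
Proof.
elim: n => [|n IH] u L; first by exists u; split => //; split.
case: u => [a|[op h]]; first by exists (inl a); split => //; split.
set L0 := L ++ supp_seq (amap ar n.+1 (inr (existT _ op h))).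
pose Q (i : 'I_(size (ar op))) (sw : ((nth 0 (ar op) i).-tuple nat * Fn ar n)%type) :=
  qn sw.1 (amap ar n sw.2) = qn (h i).1 (amap ar n (h i).2) /\
  uniq (val sw.1 ++ binders sw.2).
have Hyp i (L' : seq nat) : exists sw, Q i sw /\
    forall a, a \in val sw.1 ++ binders sw.2 -> a \notin L'.
  by have [sw [E U F]] := refresh_component IH (h i).1 (h i).2 L'; exists sw.
have [ws [HQ HL Hd]] := disjoint_choice Hyp L0.
have Eam : amap ar n.+1 (inr (existT _ op ws)) = amap ar n.+1 (inr (existT _ op h)).
  by apply: Fa_inr_ext => i; case: (HQ i).
exists (inr (existT _ op ws)); split => //.
- apply/fresh_binders_inr; split => [i|//|i a /(HL i a)]; first by case: (HQ i).
  rewrite Eam mem_cat negb_or => /andP [_ /negP aS] Ha; apply: aS.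
  exact/(mem_supp_seq (nominal_Fan ar n.+1)).
- move=> a /mem_flatten_enum [i] /(HL i a); rewrite mem_cat negb_or.
  by case/andP.
Qed.

Lemma safe_iff_fresh_binders n (w : Fn ar n) :
  safe (amap ar n) w <-> fresh_binders w.
Proof.
split.
- case=> k [Hk Hmax]; apply: supp_size_fresh_binders.
  have [w' [Ew' FBw' _]] := refresh w [::].
  have le_k := Hmax w' _ Ew' (fresh_binders_supp_size FBw').
  rewrite Ew' size_cat (size_binders_alpha Ew') -size_cat in le_k.
  suff -> : size (supp_seq (amap ar n w) ++ binders w) = k by [].
  by apply/eqP; rewrite eqn_leq le_k (supp_size_le Hk).
- move=> FBw; exists (size (supp_seq (amap ar n w) ++ binders w)).
  split; first exact: fresh_binders_supp_size.
  move=> v k' Ev /supp_size_le; rewrite Ev !size_cat.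
  by rewrite (size_binders_alpha Ev).
Qed.

(** * Lifting along the square *)

Definition liftable n : Prop :=
  forall (u : Fn ar n) (v : Fan ar n.+1),
  fresh_binders u -> amap ar n u = Fabang ar n v ->
  (forall a, a \in binders u -> ~ in_supp v a) -> forall L : seq nat,
  exists z : Fn ar n.+1,
    [/\ Fbang ar n z = u, amap ar n.+1 z = v, fresh_binders z &
        forall a, a \in binders z -> a \in L -> a \in binders u].

(* Depth one: the binders of an operation node are chosen fresh. *)
Lemma lift_base : liftable 0.
Proof.
move=> u [a|[op k]] _ _ _ L; first by exists (inl a); split => //; case: u.
set v := (inr (existT _ op k) : Fan ar 1).
pose Q (i : 'I_(size (ar op))) (s : (nth 0 (ar op) i).-tuple nat) := uniq s.
have Hyp i (L' : seq nat) : exists s, Q i s /\ forall a, a \in val s -> a \notin L'.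
  by exists (fresh_tuple L' _); apply: fresh_tupleP.
have [ws [HQ HL Hd]] := disjoint_choice Hyp (L ++ supp_seq v).
pose z : Fn ar 1 := inr (@existT Op (fun o => forall i : 'I_(size (ar o)),
       ((nth 0 (ar o) i).-tuple nat * car unitP)%type) op (fun i => (ws i, tt))).
have Eam : amap ar 1 z = v by apply: Fa_inr_ext => i; apply: absn_unit_trivial.
exists z; split => //; first by case: u.
- apply/fresh_binders_inr; rewrite Eam /=; split => [i|i j a|i a]; rewrite ?cats0.
  + exact: HQ.
  + exact: Hd.
  + move=> /(HL i a); rewrite mem_cat negb_or => /andP [_ /negP aS] Ha; apply: aS.
    exact/(mem_supp_seq (nominal_Fan ar 1)).
- move=> a /mem_flatten_enum [i]; rewrite cats0 => /(HL i a).
  by rewrite mem_cat negb_or => /andP [/negbTE ->].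
Qed.

(* One component (t, x) of a node: open the abstraction K along t, lift the
   body by induction, and keep t as the bound names. *)
Lemma lift_component m : liftable m ->
  forall k (t : k.-tuple nat) (x : Fn ar m) (K : absn k (Fan ar m.+1)) (L : seq nat),
  uniq (val t ++ binders x) ->
  (forall a, a \in binders x -> ~ in_supp (qn t (amap ar m x)) a) ->
  (forall a, a \in val t ++ binders x -> ~ in_supp K a) ->
  qn t (amap ar m x) = absn_map (Fabang ar m) K ->
  exists w : Fn ar m.+1,
    [/\ Fbang ar m w = x, qn t (amap ar m.+1 w) = K, uniq (val t ++ binders w) &
        forall a, a \in val t ++ binders w -> a \in L -> a \in val t ++ binders x].
Proof.
move=> IH k t x K L utx Hx HK E.
have HFa := nominal_Fan ar m; have HFa1 := nominal_Fan ar m.+1.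
move: (utx); rewrite cat_uniq => /and3P [ut /hasPn tx ux].
have [y [Ky Ey]] : exists y, K = qn t y /\ Fabang ar m y = amap ar m x.
  apply: (absn_map_lift HFa1 HFa (@equivariant_Fabang _ ar m)) => //.
  by move=> j jt; apply: HK; rewrite mem_cat jt.
have FBx : fresh_binders x.
  by split => // a ax Ha; apply: (Hx a ax); apply/(in_supp_qn HFa); split => //; apply: tx.
have Hy a : a \in binders x -> ~ in_supp y a.
  move=> ax Ha; apply: (HK a); first by rewrite mem_cat ax orbT.
  by rewrite Ky; apply/(in_supp_qn HFa1); split => //; apply: tx.
have [w [Ew Eaw [uw _] Lw]] := IH x y FBx (esym Ey) Hy (L ++ val t).
exists w; split => //; first by rewrite Eaw Ky.
- rewrite cat_uniq ut uw andbT /=; apply/hasPn => a aw; apply/negP => at_.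
  have ax : a \in binders x by apply: Lw => //; rewrite mem_cat at_ orbT.
  by move: (tx a ax); rewrite at_.
- move=> a; rewrite !mem_cat => /orP [-> //|aw] aL; apply/orP; right.
  by apply: Lw; rewrite // mem_cat aL.
Qed.

Section LiftNode.
Variable m : nat.
Hypothesis IH : liftable m.
Variable op : Op.
Variable h : forall i : 'I_(size (ar op)), ((nth 0 (ar op) i).-tuple nat * Fn ar m)%type.
Variable k : forall i : 'I_(size (ar op)), absn (nth 0 (ar op) i) (Fan ar m.+1).
Let u : Fn ar m.+1 := inr (existT _ op h).
Let v : Fan ar m.+2 := inr (existT _ op k).
Hypothesis FBu : fresh_binders u.
Hypothesis Ek : forall i, qn (h i).1 (amap ar m (h i).2) = absn_map (Fabang ar m) (k i).
Hypothesis Hv : forall a, a \in binders u -> ~ in_supp v a.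

Lemma binders_node i a : a \in val (h i).1 ++ binders (h i).2 -> a \in binders u.
Proof. by move=> ai; apply/mem_flatten_enum; exists i. Qed.

Lemma lift_node_component i (L : seq nat) :
  exists w : Fn ar m.+1,
    [/\ Fbang ar m w = (h i).2, qn (h i).1 (amap ar m.+1 w) = k i,
        uniq (val (h i).1 ++ binders w) &
        forall a, a \in val (h i).1 ++ binders w -> a \in L ->
                  a \in val (h i).1 ++ binders (h i).2].
Proof.
case/fresh_binders_inr: FBu => Hu _ Hsu; apply: (lift_component IH L (Hu i) _ _ (Ek i)).
- move=> a ax Ha; apply: (Hsu i a); first by rewrite mem_cat ax orbT.
  by apply/(in_supp_Fa_inr (nominal_Fan ar m)); exists i.
- move=> a ai Ha; apply: (Hv (binders_node ai)).
  by apply/(in_supp_Fa_inr (nominal_Fan ar m.+1)); exists i.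
Qed.

(* The components are lifted one after the other, the new binders of each
   avoiding L, supp v, the binders of u and the new binders of the others. *)
Lemma lift_node (L : seq nat) :
  exists z : Fn ar m.+2,
    [/\ Fbang ar m.+1 z = u, amap ar m.+2 z = v, fresh_binders z &
        forall a, a \in binders z -> a \in L -> a \in binders u].
Proof.
case/fresh_binders_inr: FBu => _ Hdj _.
set L0 := L ++ supp_seq v ++ binders u.
have old_in_L0 i a : a \in val (h i).1 ++ binders (h i).2 -> a \in L0.
  by move=> /binders_node au; rewrite !mem_cat au !orbT.
pose Q (i : 'I_(size (ar op))) (w : Fn ar m.+1) :=
  [/\ Fbang ar m w = (h i).2, qn (h i).1 (amap ar m.+1 w) = k i,
      uniq (val (h i).1 ++ binders w) &
      forall a, a \in val (h i).1 ++ binders w -> a \in L0 ->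
                a \in val (h i).1 ++ binders (h i).2].
pose new (i : 'I_(size (ar op))) (w : Fn ar m.+1) :=
  [seq a <- val (h i).1 ++ binders w | a \notin binders u].
have Hyp i (L' : seq nat) : exists w, Q i w /\ forall a, a \in new i w -> a \notin L'.
  have [w [w1 w2 w3 w4]] := lift_node_component i (L' ++ L0).
  exists w; split; first by split => // a aw aL0; apply: w4; rewrite // mem_cat aL0 orbT.
  move=> a; rewrite mem_filter => /andP [aB aw]; apply: contra aB => aL'.
  by apply: (@binders_node i); apply: w4; rewrite // mem_cat aL'.
have [ws [HQ _ Hd]] := disjoint_choice Hyp [::].
have old_or_new i a : a \in val (h i).1 ++ binders (ws i) ->
    a \in val (h i).1 ++ binders (h i).2 \/ (a \notin L0 /\ a \in new i (ws i)).
  move=> aw; case: (HQ i) => _ _ _ /(_ a aw) Hold.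
  case aL0: (a \in L0); [by left; apply: Hold | right; split => //].
  by rewrite mem_filter aw andbT; apply: contraFN aL0 => aB; rewrite !mem_cat aB !orbT.
exists (inr (existT _ op (fun i => ((h i).1, ws i)))).
have Eam : amap ar m.+2 (inr (existT _ op (fun i => ((h i).1, ws i)))) = v.
  by apply: Fa_inr_ext => i; case: (HQ i).
split => //.
- apply: F_inr_ext => i; case: (HQ i) => E _ _ _.
  by rewrite [RHS]surjective_pairing -E.
- apply/fresh_binders_inr; rewrite Eam /=; split => [i|i j a ij|i a].
  + by case: (HQ i).
  + move=> /old_or_new [ai|[aL0 ai]]; apply/negP => /old_or_new [aj|[aL0' aj]].
    * by move: (Hdj i j a ij ai); rewrite aj.
    * by move: aL0'; rewrite (old_in_L0 i a ai).
    * by move: aL0; rewrite (old_in_L0 j a aj).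
    * by move: (Hd i j a ij ai); rewrite aj.
  + move=> /old_or_new [ai|[aL0 _]]; first exact: (Hv (binders_node ai)).
    move=> Ha; move: aL0; rewrite !mem_cat !negb_or => /and3P [_ /negP aS _].
    by apply: aS; apply/(mem_supp_seq (nominal_Fan ar m.+2)).
- move=> a /mem_flatten_enum [i] /old_or_new [ai|[aL0 _]] aL.
    exact: binders_node ai.
  by move: aL0; rewrite !mem_cat aL.
Qed.
End LiftNode.

Lemma lift_step m : liftable m -> liftable m.+1.
Proof.
move=> IH [a|[op h]] [b|[op' k]] FBu /= E Hv L //.
- by case: E => <-; exists (inl a); split => //; split.
- have Eop : op = op' by case: E.
  subst op'; have {}E := inr_existT_inj E.
  exact: (lift_node IH FBu (fun i => congr1 (fun g => g i) E) Hv L).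
Qed.

Lemma lift n : liftable n.
Proof. by elim: n => [|n IH]; [exact: lift_base | exact: lift_step]. Qed.
End RawTerms.

Theorem proposition5p46 (Op : Type) (ar : Op -> seq nat)
    (Hcount : exists e : Op -> nat, injective e) (n : nat) :
  safe_square (Fbang ar n) (amap ar n) (amap ar n.+1) (Fabang ar n).
Proof.
split; first exact: square_commutes.
move=> u v /safe_iff_fresh_binders FBu E Hbv.
have Hv a : a \in binders u -> ~ in_supp v a.
  move=> au; apply: Hbv; first by apply/in_supp_raw; right.
  exact: (proj2 FBu a au).
have [z [Ez1 Ez2 FBz _]] := lift FBu E Hv [::].
by exists z; split => //; apply/safe_iff_fresh_binders.
Qed.
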